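(* Let $\mathcal H$ be an infinite-dimensional complex Hilbert space and let $\mathbf A=(A_1,\dots,A_m)$ be an $m$-tuple of bounded self-adjoint operators on $\mathcal H$. Then $\Lambda_k(\mathbf A)$ is star-shaped for each positive integer $k$. Moreover, if $\mathbf a\in\Lambda_\infty(\mathbf A)$, then $\mathbf a$ is a star center of $\Lambda_k(\mathbf A)$ for every positive integer $k$.
   Context: For a positive integer $k$, $\Lambda_k(\mathbf A)=\{(a_1,\dots,a_m)\in\mathbb R^m:$ there is an orthogonal projection $P$ of rank $k$ on $\mathcal H$ with $PA_jP=a_jP$ for $j=1,\dots,m\}$, and $\Lambda_\infty(\mathbf A)$ is defined the same way with $P$ ranging over orthogonal projections of infinite rank. A set $S\subseteq\mathbb R^m$ is star-shaped with star center $\mathbf c\in S$ if for every $\mathbf b\in S$ the segment joining $\mathbf c$ and $\mathbf b$ lies in $S$. *)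

From HB Require Import structures.
From mathcomp Require Import all_boot all_order all_algebra.
From mathcomp Require Import complex.
From mathcomp Require Import all_classical all_reals.
Set Implicit Arguments. Unset Strict Implicit. Unset Printing Implicit Defensive.
Import Order.TTheory GRing.Theory Num.Theory.
Local Open Scope ring_scope.
Local Open Scope classical_set_scope.

Section Hilbert.
Variables (R : realType) (H : lmodType R[i]) (ip : H -> H -> R[i]).

Definition is_inner_product : Prop :=
  [/\ (forall (c : R[i]) (x y z : H), ip (c *: x + y) z = c * ip x z + ip y z),
      (forall x y : H, ip y x = conjc (ip x y)),
      (forall x : H, @complex.Im R (ip x x) = 0 /\ 0 <= @complex.Re R (ip x x)) &
      (forall x : H, ip x x = 0 -> x = 0)].

Definition hnorm (x : H) : R := Num.sqrt (@complex.Re R (ip x x)).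

Definition hcauchy (u : nat -> H) : Prop :=
  forall eps : R, 0 < eps -> exists N : nat, forall m n : nat,
    (N <= m)%N -> (N <= n)%N -> hnorm (u m - u n) < eps.

Definition hconverges (u : nat -> H) : Prop :=
  exists l : H, forall eps : R, 0 < eps -> exists N : nat, forall n : nat,
    (N <= n)%N -> hnorm (u n - l) < eps.

Definition complex_hilbert_space : Prop :=
  is_inner_product /\ forall u : nat -> H, hcauchy u -> hconverges u.

Definition lin_indep (n : nat) (v : 'I_n -> H) : Prop :=
  forall c : 'I_n -> R[i], \sum_(i < n) c i *: v i = 0 -> forall i, c i = 0.

Definition infinite_dimensional : Prop :=
  forall n : nat, exists v : 'I_n -> H, lin_indep v.

Definition is_linear_op (T : H -> H) : Prop :=
  forall (c : R[i]) (x y : H), T (c *: x + y) = c *: T x + T y.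

Definition bounded_op (T : H -> H) : Prop :=
  is_linear_op T /\ exists C : R, forall x : H, hnorm (T x) <= C * hnorm x.

Definition self_adjoint (T : H -> H) : Prop :=
  forall x y : H, ip (T x) y = ip x (T y).

Definition bounded_self_adjoint (T : H -> H) : Prop :=
  bounded_op T /\ self_adjoint T.

Definition orth_projection (P : H -> H) : Prop :=
  bounded_self_adjoint P /\ forall x : H, P (P x) = P x.

Definition has_rank (P : H -> H) (k : nat) : Prop :=
  exists v : 'I_k -> H,
    [/\ lin_indep v, (forall i, exists y, v i = P y) &
        (forall x : H, exists c : 'I_k -> R[i], P x = \sum_(i < k) c i *: v i)].

Definition infinite_rank (P : H -> H) : Prop :=
  forall n : nat, exists v : 'I_n -> H,
    lin_indep v /\ forall i, exists y, v i = P y.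

Definition compresses_to (m : nat) (A : 'I_m -> H -> H) (P : H -> H)
  (a : 'I_m -> R) : Prop :=
  forall (j : 'I_m) (x : H), P (A j (P x)) = (a j)%:C%C *: P x.

Definition Lambda_k (m : nat) (A : 'I_m -> H -> H) (k : nat)
  : set ('I_m -> R) :=
  [set a | exists P : H -> H, [/\ orth_projection P, has_rank P k &
                                  compresses_to A P a]].

Definition Lambda_inf (m : nat) (A : 'I_m -> H -> H) : set ('I_m -> R) :=
  [set a | exists P : H -> H, [/\ orth_projection P, infinite_rank P &
                                  compresses_to A P a]].
End Hilbert.

Definition star_center (R : realType) (m : nat) (S : set ('I_m -> R))
  (c : 'I_m -> R) : Prop :=
  S c /\ forall b, S b -> forall t : R, 0 <= t <= 1 ->
    S (fun j => (1 - t) * c j + t * b j).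

Definition star_shaped (R : realType) (m : nat) (S : set ('I_m -> R)) : Prop :=
  exists c, star_center S c.

(* Suppose a is realised by an orthogonal projection P whose range
   contains k(m+2) independent vectors, and b ∈ Λ_k(A) by an orthonormal frame
   q_1..q_k with <A_j q_s, q_t> = δ_st b_j.  The range of P then contains an
   orthonormal frame x_1..x_k orthogonal to every q_t and every A_j q_t (only
   k(m+1) linear conditions), and y_s = √(1-r) x_s + √r q_s is an orthonormal
   frame compressing A to (1-r)a + r b.  Hence every a ∈ Λ_∞(A), and every
   a ∈ Λ_{k(m+2)}(A), is a star center of Λ_k(A); star-shapedness follows once
   all Λ_K(A) are nonempty.  For that, pick (m+2)^K orthonormal vectors x_n on
   which every A_j is diagonal, with diagonal entries d_n ∈ R^m.  Applying
   Radon's theorem K times to blocks of these points yields 2^K ≥ K probability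
   weights w_s with pairwise disjoint supports and a common barycenter p, and
   the frame Σ_n √(w_s n) x_n realises p ∈ Λ_K(A). *)

From HB Require Import structures.
From mathcomp Require Import all_boot all_order all_algebra.
From mathcomp Require Import complex.
From mathcomp Require Import all_classical all_reals.
From mathcomp Require Import ring lra zify.
Set Implicit Arguments. Unset Strict Implicit. Unset Printing Implicit Defensive.
Import Order.TTheory GRing.Theory Num.Theory.
Local Open Scope ring_scope.
Local Open Scope complex_scope.

Section InnerProduct.
Variables (R : realType) (H : lmodType R[i]) (ip : H -> H -> R[i]).
Hypothesis hip : is_inner_product ip.

Let ip_left (z : H) : {linear H -> R[i]^o} :=
  HB.pack (ip^~ z) (GRing.isLinear.Build R[i] H R[i]^o *:%R _
    (fun c x y => let: And4 lin_ip _ _ _ := hip in lin_ip c x y z)).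

Lemma ipC x y : ip y x = conjc (ip x y).
Proof. by case: hip. Qed.

Lemma ip0l z : ip 0 z = 0.
Proof. exact: (raddf0 (ip_left z)). Qed.

Lemma ipDl x y z : ip (x + y) z = ip x z + ip y z.
Proof. exact: (raddfD (ip_left z)). Qed.

Lemma ipBl x y z : ip (x - y) z = ip x z - ip y z.
Proof. exact: (raddfB (ip_left z)). Qed.

Lemma ipZl c x z : ip (c *: x) z = c * ip x z.
Proof. exact: (linearZ_LR (ip_left z)). Qed.

Lemma ip_suml (I : Type) (r : seq I) (P : pred I) (F : I -> H) z :
  ip (\sum_(i <- r | P i) F i) z = \sum_(i <- r | P i) ip (F i) z.
Proof. exact: (raddf_sum (ip_left z)). Qed.

Lemma ipDr x y z : ip z (x + y) = ip z x + ip z y.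
Proof. by rewrite ipC ipDl rmorphD /= -!ipC. Qed.

Lemma ipZr c x z : ip z (c *: x) = conjc c * ip z x.
Proof. by rewrite ipC ipZl rmorphM /= -ipC. Qed.

Lemma ipZr_real (c : R) x z : ip z (c%:C *: x) = c%:C * ip z x.
Proof. by rewrite ipZr conjc_real. Qed.

Lemma ip_sumr (I : Type) (r : seq I) (P : pred I) (F : I -> H) z :
  ip z (\sum_(i <- r | P i) F i) = \sum_(i <- r | P i) ip z (F i).
Proof. by rewrite ipC ip_suml rmorph_sum /=; apply: eq_bigr => i _; rewrite -ipC. Qed.

Lemma ip_add_orth u w : ip u w = 0 -> ip (u + w) (u + w) = ip u u + ip w w.
Proof. by move=> h; rewrite ipDl !ipDr h [ip w u]ipC h conjc0 addr0 add0r. Qed.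

Lemma ip_self_real x : ip x x = (complex.Re (ip x x))%:C.
Proof.
case: hip => _ _ /(_ x)[hIm _] _.
by rewrite [LHS]complexE hIm mulr0 addr0.
Qed.

Lemma ip_self_ge0 x : 0 <= complex.Re (ip x x).
Proof. by case: hip => _ _ /(_ x)[]. Qed.

Lemma ip_self_eq0 x : ip x x = 0 -> x = 0.
Proof. by case: hip => _ _ _; apply. Qed.

End InnerProduct.

Section LinearOperator.
Variables (R : realType) (H : lmodType R[i]) (T : H -> H).
Hypothesis hT : is_linear_op T.

Let linT : {linear H -> H} := HB.pack T (GRing.isLinear.Build R[i] H H *:%R T hT).

Lemma linD x y : T (x + y) = T x + T y.
Proof. exact: (raddfD linT). Qed.

Lemma linZ c x : T (c *: x) = c *: T x.
Proof. exact: (linearZ_LR linT). Qed.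

Lemma lin_sum (I : Type) (r : seq I) (P : pred I) (F : I -> H) :
  T (\sum_(i <- r | P i) F i) = \sum_(i <- r | P i) T (F i).
Proof. exact: (raddf_sum linT). Qed.

End LinearOperator.

Lemma sum_kronecker (V : nmodType) k (F : 'I_k -> V) (t : 'I_k) :
  \sum_(s < k) F s *+ (s == t) = F t.
Proof. by under eq_bigr do rewrite mulrb; rewrite -big_mkcond big_pred1_eq. Qed.

Section SpanProjection.
Variables (R : realType) (H : lmodType R[i]) (ip : H -> H -> R[i]).
Hypothesis hip : is_inner_product ip.

Definition orthonormal (k : nat) (y : nat -> H) : Prop :=
  forall s t, (s < k)%N -> (t < k)%N -> ip (y s) (y t) = (s == t)%:R.

Definition span_proj (k : nat) (y : nat -> H) (x : H) : H :=
  \sum_(s < k) ip x (y s) *: y s.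

Variables (k : nat) (y : nat -> H).
Hypothesis hy : orthonormal k y.
Local Notation P := (span_proj k y).

Lemma span_proj_ip x (t : 'I_k) : ip (P x) (y t) = ip x (y t).
Proof.
rewrite ip_suml //; under eq_bigr => s _ do rewrite ipZl // hy // mulr_natr.
exact: sum_kronecker.
Qed.

Lemma span_proj_linear : is_linear_op P.
Proof.
move=> a x z; rewrite /span_proj scaler_sumr -big_split /=; apply: eq_bigr => s _.
by rewrite ipDl // ipZl // scalerDl scalerA.
Qed.

Lemma span_proj_self_adjoint : self_adjoint ip P.
Proof.
move=> x z; rewrite ip_suml // ip_sumr //; apply: eq_bigr => s _.
by rewrite ipZl // ipZr // -ipC // mulrC.
Qed.

Lemma span_proj_idem x : P (P x) = P x.
Proof. by rewrite {1}/span_proj; apply: eq_bigr => s _; rewrite span_proj_ip. Qed.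

Lemma span_proj_residual_orth x : ip (x - P x) (P x) = 0.
Proof.
rewrite ip_sumr //; apply: big1 => s _.
by rewrite ipZr // ipBl // span_proj_ip subrr mulr0.
Qed.

Lemma span_proj_contraction x : hnorm ip (P x) <= hnorm ip x.
Proof.
rewrite /hnorm; apply: ler_wsqrtr.
have := ip_add_orth hip (span_proj_residual_orth x); rewrite subrK => ->.
by rewrite raddfD /= lerDr ip_self_ge0.
Qed.

Lemma span_proj_rank : has_rank P k.
Proof.
exists (fun i : 'I_k => y i); split.
- move=> c hc i; have := congr1 (ip^~ (y i)) hc.
  rewrite /= ip_suml // ip0l //; under eq_bigr => s _ do rewrite ipZl // hy // mulr_natr.
  by rewrite sum_kronecker.
- move=> i; exists (y i); rewrite /span_proj.
  by under eq_bigr => s _ do rewrite hy // eq_sym scaler_nat; rewrite sum_kronecker.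
- by move=> x; exists (fun i => ip x (y i)).
Qed.

Lemma span_proj_orth_projection : orth_projection ip P.
Proof.
split; last exact: span_proj_idem.
split; last exact: span_proj_self_adjoint.
split; first exact: span_proj_linear.
by exists 1 => x; rewrite mul1r span_proj_contraction.
Qed.

End SpanProjection.

Section DiagonalCompression.
Variables (R : realType) (H : lmodType R[i]) (ip : H -> H -> R[i]).
Hypothesis hip : is_inner_product ip.
Variables (m : nat) (A : 'I_m -> H -> H).
Hypothesis hA : forall j, bounded_self_adjoint ip (A j).

Lemma A_linear j : is_linear_op (A j).
Proof. by case: (hA j) => [[]]. Qed.

Lemma A_self_adjoint j x y : ip (A j x) y = ip x (A j y).
Proof. by case: (hA j). Qed.

Definition diag_compression (k : nat) (y : nat -> H) (c : 'I_m -> R) : Prop :=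
  forall j s t, (s < k)%N -> (t < k)%N ->
    ip (A j (y s)) (y t) = (s == t)%:R * (c j)%:C.

Lemma Lambda_k_diag_compression k y c :
  orthonormal ip k y -> diag_compression k y c -> Lambda_k ip A k c.
Proof.
move=> hy hAy; exists (span_proj ip k y); split.
- exact: span_proj_orth_projection.
- exact: span_proj_rank.
move=> j x; rewrite {1}/span_proj /span_proj scaler_sumr; apply: eq_bigr => t _.
rewrite scalerA; congr (_ *: _).
rewrite (lin_sum (A_linear j)) ip_suml //.
under eq_bigr => s _ do rewrite (linZ (A_linear j)) ipZl // hAy // mulrA mulr_natr.
by rewrite -mulr_suml sum_kronecker mulrC.
Qed.

End DiagonalCompression.

Lemma exists_left_kernel_vector (F : fieldType) (N r : nat) (M : 'M[F]_(N, r)) :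
  (r < N)%N -> exists2 u : 'rV[F]_N, u != 0 & u *m M = 0.
Proof.
move=> hrN; have /rowV0Pn[u hu u0] : kermx M != 0.
  by rewrite -mxrank_eq0 mxrank_ker subn_eq0 -ltnNge (leq_ltn_trans (rank_leq_col M)).
by exists u => //; apply/sub_kermxP.
Qed.

Lemma ltnS_eqVlt (s k : nat) : (s < k.+1)%N -> s = k \/ (s < k)%N.
Proof. by rewrite ltnS leq_eqVlt => /predU1P. Qed.

Section OrthonormalFamilies.
Variables (R : realType) (H : lmodType R[i]) (ip : H -> H -> R[i]).
Hypothesis hip : is_inner_product ip.

Definition in_span N (v : 'I_N -> H) (u : H) : Prop :=
  exists c : 'I_N -> R[i], u = \sum_i c i *: v i.

Lemma exists_orthogonal_in_span N (v : 'I_N -> H) (F : seq H) :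
  lin_indep v -> (size F < N)%N ->
  exists u, [/\ in_span v u, u != 0 & forall w, w \in F -> ip u w = 0].
Proof.
move=> hv hF.
pose M := \matrix_(i < N, j < size F) ip (v i) (nth 0 F j).
have [c c0 hcM] := exists_left_kernel_vector M hF.
exists (\sum_i c 0 i *: v i); split; first by exists (c 0).
  apply: contra c0 => /eqP /hv c_eq0; apply/eqP/rowP => i.
  by rewrite !mxE c_eq0.
move=> w hw; have hiw : (index w F < size F)%N by rewrite index_mem.
have := congr1 (fun B : 'rV_(size F) => B 0 (Ordinal hiw)) hcM; rewrite !mxE => <-.
by rewrite ip_suml //; apply: eq_bigr => i _; rewrite ipZl // mxE nth_index.
Qed.

Lemma exists_unit_multiple u : u != 0 -> exists a : R, ip (a%:C *: u) (a%:C *: u) = 1.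
Proof.
move=> u0; set r := complex.Re (ip u u).
have r_gt0 : 0 < r.
  rewrite lt_def ip_self_ge0 // andbT; apply: contra u0 => /eqP r0.
  by apply/eqP/(ip_self_eq0 hip); rewrite ip_self_real // -/r r0.
exists (Num.sqrt r)^-1.
rewrite ipZl // ipZr_real // ip_self_real // -/r -!rmorphM /= mulrA -expr2.
by rewrite exprVn sqr_sqrtr ?ltW // mulVf ?gt_eqF.
Qed.

Lemma exists_unit_orthogonal_in_span N (v : 'I_N -> H) (F : seq H) :
  lin_indep v -> (size F < N)%N ->
  exists u, [/\ in_span v u, ip u u = 1 & forall w, w \in F -> ip u w = 0].
Proof.
move=> hv hF; have [u [[c ->] u0 huF]] := exists_orthogonal_in_span hv hF.
have [a ha] := exists_unit_multiple u0.
exists (a%:C *: \sum_i c i *: v i); split => //.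
- by exists (fun i => a%:C * c i); rewrite scaler_sumr; under eq_bigr do rewrite scalerA.
- by move=> w hw; rewrite ipZl // huF // mulr0.
Qed.

Lemma exists_orthonormal_avoiding N (v : 'I_N -> H) (F : seq H)
    e (E : 'I_e -> H -> H) k :
  lin_indep v -> (size F + k * e.+1 <= N)%N ->
  exists x : nat -> H, [/\ orthonormal ip k x,
    forall s, (s < k)%N -> in_span v (x s),
    forall s w, (s < k)%N -> w \in F -> ip (x s) w = 0 &
    forall s t j, (t < s < k)%N -> ip (x s) (E j (x t)) = 0].
Proof.
move=> hv; elim: k => [|k IH] hN.
  by exists (fun=> 0); split=> [s t|s|s w|s t j]; rewrite ?ltn0 ?andbF.
have [|x [hxo hxv hxF hxE]] := IH.
  by apply: leq_trans hN; rewrite leq_add2l leq_mul2r ltnW ?orbT.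
set G := F ++ [seq x t | t <- iota 0 k] ++ [seq E j (x t) | t <- iota 0 k, j <- enum 'I_e].
have hG : (size G < N)%N.
  rewrite !size_cat size_map size_allpairs size_iota size_enum_ord.
  by move: hN; rewrite mulSn; lia.
have [u [hu hu1 huG]] := exists_unit_orthogonal_in_span hv hG.
have hux t : (t < k)%N -> ip u (x t) = 0.
  by move=> ht; apply: huG; rewrite !mem_cat map_f ?orbT // mem_iota.
have hxu t : (t < k)%N -> ip (x t) u = 0 by move=> ht; rewrite ipC // hux // conjc0.
exists (fun n => if n == k then u else x n); split.
- move=> s t /ltnS_eqVlt[->|hs] /ltnS_eqVlt[->|ht].
  + by rewrite eqxx.
  + by rewrite eqxx (ltn_eqF ht) hux // eq_sym (ltn_eqF ht).
  + by rewrite eqxx (ltn_eqF hs) hxu.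
  + by rewrite (ltn_eqF hs) (ltn_eqF ht) hxo.
- move=> s /ltnS_eqVlt[->|hs]; first by rewrite eqxx.
  by rewrite (ltn_eqF hs); apply: hxv.
- move=> s w /ltnS_eqVlt[-> hw|hs hw].
    by rewrite eqxx huG // mem_cat hw.
  by rewrite (ltn_eqF hs) hxF.
- move=> s t j /andP[hts /ltnS_eqVlt[hs|hs]]; last first.
    by rewrite (ltn_eqF hs) (ltn_eqF (ltn_trans hts hs)) hxE ?hts.
  subst s; rewrite eqxx (ltn_eqF hts) huG // !mem_cat.
  by rewrite (allpairs_f (fun t j => E j (x t))) ?orbT ?mem_iota ?mem_enum.
Qed.

Lemma exists_orthonormal_in_span N (v : 'I_N -> H) (F : seq H) k :
  lin_indep v -> (size F + k <= N)%N ->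
  exists x : nat -> H, [/\ orthonormal ip k x,
    forall s, (s < k)%N -> in_span v (x s) &
    forall s w, (s < k)%N -> w \in F -> ip (x s) w = 0].
Proof.
move=> hv hN; have := @exists_orthonormal_avoiding N v F 0 (fun _ u => u) k hv.
rewrite muln1 => /(_ hN)[x [hxo hxv hxF _]].
by exists x.
Qed.

End OrthonormalFamilies.

Section StarCenter.
Variables (R : realType) (H : lmodType R[i]) (ip : H -> H -> R[i]).
Hypothesis hip : is_inner_product ip.
Variables (m : nat) (A : 'I_m -> H -> H).
Hypothesis hA : forall j, bounded_self_adjoint ip (A j).

Lemma orth_projection_fixes_span P N (v : 'I_N -> H) u :
  orth_projection ip P -> (forall i, exists y, v i = P y) -> in_span v u -> P u = u.
Proof.
move=> [[[hPlin _] _] hPidem] hvP [c ->]; rewrite (lin_sum hPlin).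
by apply: eq_bigr => i _; have [y ->] := hvP i; rewrite (linZ hPlin) hPidem.
Qed.

Lemma diag_compression_in_range P a k x :
  orth_projection ip P -> compresses_to A P a -> orthonormal ip k x ->
  (forall s, (s < k)%N -> P (x s) = x s) -> diag_compression ip A k x a.
Proof.
move=> [[_ hPsa] _] hPa hx hxP j s t hs ht.
by rewrite -(hxP s hs) -(hxP t ht) -hPsa hPa (ipZl hip) !hxP // hx // mulrC.
Qed.

(* Realised by the frame √(1-r) x_s + √r q_s. *)
Lemma Lambda_k_segment k x q a b r :
  orthonormal ip k x -> diag_compression ip A k x a ->
  orthonormal ip k q -> diag_compression ip A k q b ->
  (forall s t, (s < k)%N -> (t < k)%N -> ip (x s) (q t) = 0) ->
  (forall j s t, (s < k)%N -> (t < k)%N -> ip (A j (x s)) (q t) = 0) ->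
  0 <= r <= 1 -> Lambda_k ip A k (fun j => (1 - r) * a j + r * b j).
Proof.
move=> hx hxa hq hqb hxq hAxq /andP[r0 r1].
set al := Num.sqrt (1 - r); set be := Num.sqrt r.
have hal : al%:C * al%:C = (1 - r)%:C by rewrite -rmorphM -expr2 sqr_sqrtr // subr_ge0.
have hbe : be%:C * be%:C = r%:C by rewrite -rmorphM -expr2 sqr_sqrtr.
have hqx s t : (s < k)%N -> (t < k)%N -> ip (q s) (x t) = 0.
  by move=> hs ht; rewrite (ipC hip) hxq // conjc0.
have hAqx j s t : (s < k)%N -> (t < k)%N -> ip (A j (q s)) (x t) = 0.
  by move=> hs ht; rewrite A_self_adjoint // (ipC hip) hAxq // conjc0.
apply: (Lambda_k_diag_compression hip hA (y := fun n => al%:C *: x n + be%:C *: q n)).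
- move=> s t hs ht; rewrite (ipDl hip) !(ipDr hip) !(ipZl hip) !(ipZr_real hip).
  rewrite hxq // hqx // hx // hq //.
  by rewrite !mulr0 addr0 add0r !mulrA hal hbe -mulrDl -rmorphD subrK mul1r.
- move=> j s t hs ht; have hAj := A_linear hA j.
  rewrite (linD hAj) !(linZ hAj) (ipDl hip) !(ipDr hip) !(ipZl hip) !(ipZr_real hip).
  rewrite hAxq // hAqx // hxa // hqb // !mulr0 addr0 add0r !mulrA hal hbe.
  by ring.
Qed.

Lemma exists_frame_in_range P a N (v : 'I_N -> H) (F : seq H) k :
  orth_projection ip P -> compresses_to A P a ->
  lin_indep v -> (forall i, exists y, v i = P y) -> (size F + k <= N)%N ->
  exists x, [/\ orthonormal ip k x, diag_compression ip A k x a &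
                forall s w, (s < k)%N -> w \in F -> ip (x s) w = 0].
Proof.
move=> hP hPa hv hvP hN; have [x [hx hxv hxF]] := exists_orthonormal_in_span hip hv hN.
exists x; split=> //; apply: (diag_compression_in_range hP hPa hx) => s hs.
exact: orth_projection_fixes_span hP hvP (hxv s hs).
Qed.

Lemma star_center_Lambda_k P a N (v : 'I_N -> H) k :
  orth_projection ip P -> compresses_to A P a ->
  lin_indep v -> (forall i, exists y, v i = P y) -> (k * m.+2 <= N)%N ->
  star_center (Lambda_k ip A k) a.
Proof.
move=> hP hPa hv hvP hN; split.
  have [|x [hx hxa _]] := exists_frame_in_range (F := [::]) (k := k) hP hPa hv hvP.
    by apply: leq_trans hN; rewrite leq_pmulr.
  exact: Lambda_k_diag_compression hx hxa.
move=> b [Q [hQ [w [hw hwQ _]] hQb]] r hr.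
have [q [hq hqb _]] := exists_frame_in_range (F := [::]) hQ hQb hw hwQ (leqnn k).
set F := [seq q t | t <- iota 0 k] ++ [seq A j (q t) | t <- iota 0 k, j <- enum 'I_m].
have [|x [hx hxa hxF]] := exists_frame_in_range (F := F) (k := k) hP hPa hv hvP.
  rewrite size_cat size_map size_allpairs size_iota size_enum_ord.
  by move: hN; rewrite !mulnS; lia.
apply: Lambda_k_segment hx hxa hq hqb _ _ hr => [s t|j s t] hs ht.
  by apply: hxF; rewrite // mem_cat map_f ?mem_iota.
rewrite A_self_adjoint // hxF // mem_cat.
by rewrite (allpairs_f (fun t j => A j (q t))) ?orbT ?mem_iota ?mem_enum.
Qed.

End StarCenter.

Lemma affine_dependence (R : fieldType) m (p : 'I_m.+2 -> 'I_m -> R) :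
  exists lam : 'I_m.+2 -> R, [/\ exists i, lam i != 0, \sum_i lam i = 0 &
    forall j, \sum_i lam i * p i j = 0].
Proof.
pose M := \matrix_(i < m.+2, j < m.+1)
  (if unlift ord_max j is Some j' then p i j' else 1).
have [u u0 huM] := exists_left_kernel_vector M (ltnSn m.+1).
have hu j : \sum_i u 0 i * M i j = 0.
  by have := congr1 (fun B : 'rV_m.+1 => B 0 j) huM; rewrite !mxE.
exists (u 0); split.
- apply/existsP; apply: contraR u0 => /existsPn u_eq0.
  by apply/eqP/rowP => i; rewrite mxE; apply/eqP/negPn/u_eq0.
- by have := hu ord_max; under eq_bigr do rewrite mxE unlift_none mulr1.
- by move=> j; have := hu (lift ord_max j); under eq_bigr do rewrite mxE liftK.
Qed.

Section RadonPartition.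
Variable R : realFieldType.

Definition pos_part (x : R) := if 0 <= x then x else 0.
Definition neg_part (x : R) := if 0 <= x then 0 else - x.

Lemma pos_part_ge0 x : 0 <= pos_part x.
Proof. by rewrite /pos_part; case: ifP. Qed.

Lemma neg_part_ge0 x : 0 <= neg_part x.
Proof. by rewrite /neg_part; case: ifP => // /negbT; rewrite -ltNge oppr_ge0 => /ltW. Qed.

Lemma pos_sub_neg_part x : pos_part x - neg_part x = x.
Proof. by rewrite /pos_part /neg_part; case: ifP; rewrite ?subr0 ?sub0r ?opprK. Qed.

Lemma pos_neg_partM x : pos_part x * neg_part x = 0.
Proof. by rewrite /pos_part /neg_part; case: ifP; rewrite ?mulr0 ?mul0r. Qed.

Lemma radon_partition m (p : 'I_m.+2 -> 'I_m -> R) :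
  exists mu nu : 'I_m.+2 -> R,
    [/\ forall i, 0 <= mu i /\ 0 <= nu i, forall i, mu i * nu i = 0,
        \sum_i mu i = 1 /\ \sum_i nu i = 1 &
        forall j, \sum_i mu i * p i j = \sum_i nu i * p i j].
Proof.
have [lam [[i0 hi0] hl1 hl2]] := affine_dependence p.
pose sig := \sum_i pos_part (lam i).
have hsn : \sum_i neg_part (lam i) = sig.
  apply/eqP; rewrite eq_sym -subr_eq0 -sumrB.
  by under eq_bigr do rewrite pos_sub_neg_part; rewrite hl1.
have sig_gt0 : 0 < sig.
  rewrite lt_def sumr_ge0 ?andbT => [|i _]; last exact: pos_part_ge0.
  apply: contra hi0 => /eqP sig0.
  have /(_ i0 isT) hp := psumr_eq0P (fun i _ => pos_part_ge0 (lam i)) sig0.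
  have /(_ i0 isT) hn := psumr_eq0P (fun i _ => neg_part_ge0 (lam i)) (etrans hsn sig0).
  by rewrite -(pos_sub_neg_part (lam i0)) hp hn subr0.
have scale F j : \sum_i F i / sig * p i j = (\sum_i F i * p i j) / sig.
  by rewrite mulr_suml; apply: eq_bigr => i _; rewrite mulrAC.
exists (fun i => pos_part (lam i) / sig), (fun i => neg_part (lam i) / sig); split.
- by move=> i; rewrite !divr_ge0 ?pos_part_ge0 ?neg_part_ge0 ?ltW.
- by move=> i; rewrite mulrACA pos_neg_partM mul0r.
- by split; rewrite -mulr_suml ?hsn mulfV ?gt_eqF.
- move=> j; rewrite !scale; congr (_ / _); apply/eqP; rewrite -subr_eq0 -sumrB.
  by under eq_bigr do rewrite -mulrBl pos_sub_neg_part; rewrite hl2.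
Qed.

End RadonPartition.

Section BarycentricFamilies.
Variables (R : realFieldType) (m : nat) (d : nat -> 'I_m -> R).

(* Sums range over any initial segment [0, M) covering the block
   [b, b + (m+2)^t), so that families on adjacent blocks can be combined
   without reindexing. *)
Definition barycentric_family (t b : nat) (p : 'I_m -> R) (w : nat -> nat -> R) : Prop :=
  [/\ forall s n, 0 <= w s n,
      forall s n, w s n != 0 -> (b <= n < b + m.+2 ^ t)%N,
      forall s s' n, (s < 2 ^ t)%N -> (s' < 2 ^ t)%N -> s != s' -> w s n * w s' n = 0,
      forall s M, (s < 2 ^ t)%N -> (b + m.+2 ^ t <= M)%N -> \sum_(n < M) w s n = 1 &
      forall s M j, (s < 2 ^ t)%N -> (b + m.+2 ^ t <= M)%N ->
        \sum_(n < M) w s n * d n j = p j].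

Lemma barycentric_family0 b : barycentric_family 0 b (d b) (fun _ n => (n == b)%:R).
Proof.
rewrite /barycentric_family expn0 addn1; split.
- by move=> s n; rewrite ler0n.
- move=> s n; case: (eqVneq n b) => [->|nb]; first by rewrite leqnn ltnSn.
  by rewrite mulr0n eqxx.
- by move=> s s' n; rewrite !ltnS !leqn0 => /eqP-> /eqP->; rewrite eqxx.
- by move=> s M _ hM; exact: (sum_kronecker (fun=> 1) (Ordinal hM)).
- move=> s M j _ hM; under eq_bigr do rewrite mulr_natl.
  exact: (sum_kronecker (d^~ j) (Ordinal hM)).
Qed.

Section Doubling.
Variables (t b : nat) (p : 'I_m.+2 -> 'I_m -> R) (w : 'I_m.+2 -> nat -> nat -> R).
Local Notation L := (m.+2 ^ t)%N.
Hypothesis hw : forall i : 'I_m.+2, barycentric_family t (b + i * L) (p i) (w i).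
Variables mu nu : 'I_m.+2 -> R.
Hypotheses (munu_ge0 : forall i, 0 <= mu i /\ 0 <= nu i)
  (munu_disj : forall i, mu i * nu i = 0)
  (munu_sum : \sum_i mu i = 1 /\ \sum_i nu i = 1)
  (munu_bary : forall j, \sum_i mu i * p i j = \sum_i nu i * p i j).

(* Family s < 2^t is Σ_i μ_i w_i s and family 2^t + s is Σ_i ν_i w_i s: the
   blocks are disjoint and μ ⊥ ν separates the two halves. *)
Let coef s i := if (s < 2 ^ t)%N then mu i else nu i.
Let shift s := if (s < 2 ^ t)%N then s else (s - 2 ^ t)%N.
Let W s n := \sum_i coef s i * w i (shift s) n.

Let shift_lt s : (s < 2 ^ t.+1)%N -> (shift s < 2 ^ t)%N.
Proof. by rewrite /shift expnS; case: ifP => //; lia. Qed.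

Let block_le (i : 'I_m.+2) : (b + i * L + L <= b + m.+2 ^ t.+1)%N.
Proof. by have := leq_mul (ltn_ord i) (leqnn L); rewrite expnS mulSn; lia. Qed.

Let block_unique (i i' : 'I_m.+2) s s' n : w i s n != 0 -> w i' s' n != 0 -> i = i'.
Proof.
case: (hw i) => _ hs _ _ _; case: (hw i') => _ hs' _ _ _.
move=> /hs/andP[h1 h2] /hs'/andP[h3 h4]; apply: ord_inj; apply/eqP.
by case: ltngtP => // hii; have := leq_mul hii (leqnn L); rewrite mulSn; lia.
Qed.

Let W_disjoint s s' n : (s < 2 ^ t.+1)%N -> (s' < 2 ^ t.+1)%N -> s != s' ->
  W s n * W s' n = 0.
Proof.
move=> hs hs' ss'; rewrite mulr_suml; apply: big1 => i _.
rewrite mulr_sumr; apply: big1 => i' _.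
have [->|wi0] := eqVneq (w i (shift s) n) 0; first by rewrite mulr0 mul0r.
have [->|wi'0] := eqVneq (w i' (shift s') n) 0; first by rewrite !mulr0.
have <- := block_unique wi0 wi'0; rewrite mulrACA.
case: (hw i) => _ _ hdisj _ _; move: (shift_lt hs) (shift_lt hs').
rewrite /coef /shift; case: ifP => h1; case: ifP => h2 => hl hl'.
2,3: by have /eqP := munu_disj i; rewrite mulf_eq0 => /orP[]/eqP->; rewrite ?(mul0r, mulr0).
  by rewrite hdisj ?mulr0.
by rewrite hdisj ?mulr0 //; move: ss' h1 h2 hs hs'; rewrite !expnS; lia.
Qed.

Let W_sum s M (F : nat -> R) :
  \sum_(n < M) W s n * F n = \sum_i coef s i * \sum_(n < M) w i (shift s) n * F n.
Proof.
under eq_bigr do rewrite mulr_suml; rewrite exchange_big /=.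
by apply: eq_bigr => i _; rewrite mulr_sumr; apply: eq_bigr => n _; rewrite mulrA.
Qed.

Let W_support s n : W s n != 0 -> (b <= n < b + m.+2 ^ t.+1)%N.
Proof.
move=> W0; have [i wi0] : exists i, w i (shift s) n != 0.
  apply/existsP; apply: contraNT W0 => /existsPn w0.
  by apply/eqP/big1 => i _; rewrite (eqP (negPn (w0 i))) mulr0.
case: (hw i) => _ /(_ _ _ wi0)/andP[h1 h2] _ _ _; have := block_le i.
by rewrite -!addnA; lia.
Qed.

Lemma barycentric_familyS :
  barycentric_family t.+1 b (fun j => \sum_i mu i * p i j) W.
Proof.
have coef_ge0 s i : 0 <= coef s i by rewrite /coef; case: ifP; case: (munu_ge0 i).
have in_block s M (i : 'I_m.+2) : (s < 2 ^ t.+1)%N -> (b + m.+2 ^ t.+1 <= M)%N ->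
    (shift s < 2 ^ t)%N /\ (b + i * L + L <= M)%N.
  by move=> hs hM; split; [apply: shift_lt | apply: leq_trans (block_le i) hM].
split.
- by move=> s n; apply: sumr_ge0 => i _; rewrite mulr_ge0 //; case: (hw i).
- exact: W_support.
- exact: W_disjoint.
- move=> s M hs hM; under eq_bigr do rewrite -[W _ _]mulr1; rewrite (W_sum s M (fun=> 1)).
  under eq_bigr => i _.
    have [hsi hMi] := in_block s M i hs hM.
    case: (hw i) => _ _ _ hsum _.
    by rewrite (eq_bigr _ (fun n _ => mulr1 _)) hsum // mulr1; over.
  by rewrite /coef; case: (s < 2 ^ t)%N; case: munu_sum.
- move=> s M j hs hM; rewrite (W_sum s M (d^~ j)).
  under eq_bigr => i _.
    have [hsi hMi] := in_block s M i hs hM.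
    by case: (hw i) => _ _ _ _ hbary; rewrite hbary //; over.
  by rewrite /coef; case: (s < 2 ^ t)%N => //; rewrite munu_bary.
Qed.

End Doubling.

Lemma exists_barycentric_family t b : exists p w, barycentric_family t b p w.
Proof.
elim: t b => [|t IH] b.
  by exists (d b), (fun _ n => (n == b)%:R); apply: barycentric_family0.
have /boolp.choice[pw hpw] : forall i : 'I_m.+2,
    exists pw : ('I_m -> R) * (nat -> nat -> R),
      barycentric_family t (b + i * m.+2 ^ t) pw.1 pw.2.
  by move=> i; have [p [w hpw]] := IH (b + i * m.+2 ^ t)%N; exists (p, w).
have [mu [nu [munu_ge0 munu_disj munu_sum munu_bary]]] :=
  radon_partition (fun i => (pw i).1).
by eexists; eexists; apply: (barycentric_familyS (w := fun i => (pw i).2) hpw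
  munu_ge0 munu_disj munu_sum munu_bary).
Qed.

End BarycentricFamilies.

Lemma conjc_fixed_real (R : realType) (z : R[i]) : conjc z = z -> z = (complex.Re z)%:C.
Proof.
by case: z => a b [] hb; apply/eqP; rewrite eq_complex /= eqxx /=; apply/eqP; lra.
Qed.

Section NonEmptiness.
Variables (R : realType) (H : lmodType R[i]) (ip : H -> H -> R[i]).
Hypothesis hip : is_inner_product ip.

Lemma ip_diag_combination (T : H -> H) L (x : nat -> H) (e al be : nat -> R) :
  is_linear_op T ->
  (forall n n', (n < L)%N -> (n' < L)%N -> ip (T (x n)) (x n') = (n == n')%:R * (e n)%:C) ->
  ip (T (\sum_(n < L) (al n)%:C *: x n)) (\sum_(n < L) (be n)%:C *: x n) =
  (\sum_(n < L) al n * be n * e n)%:C.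
Proof.
move=> hT hx; rewrite (lin_sum hT) (ip_suml hip) rmorph_sum; apply: eq_bigr => n _.
rewrite (linZ hT) (ipZl hip) (ip_sumr hip).
under eq_bigr => n' _ do rewrite (ipZr_real hip) hx // mulrCA mulr_natl eq_sym.
by rewrite (sum_kronecker (fun n' => (be n')%:C * (e n)%:C)) /= !rmorphM mulrA.
Qed.

Variables (m : nat) (A : 'I_m -> H -> H).
Hypothesis hA : forall j, bounded_self_adjoint ip (A j).
Hypothesis hinf : infinite_dimensional H.

Lemma exists_diagonalizing_orthonormal L : exists x : nat -> H, orthonormal ip L x /\
  forall j s t, (s < L)%N -> (t < L)%N -> s != t -> ip (x s) (A j (x t)) = 0.
Proof.
have [v hv] := hinf (L * m.+1).
have := exists_orthonormal_avoiding hip (F := [::]) A (k := L) hv.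
rewrite add0n => /(_ (leqnn _))[x [hx _ _ hxA]].
exists x; split => // j s t hs ht; case: ltngtP => // hst _.
  by rewrite (ipC hip) (A_self_adjoint hA) hxA ?hst ?conjc0.
by rewrite hxA ?hst.
Qed.

Lemma Lambda_k_nonempty K : exists c, Lambda_k ip A K c.
Proof.
pose L := (m.+2 ^ K)%N.
have [x [hx hxA]] := exists_diagonalizing_orthonormal L.
pose d n j := complex.Re (ip (A j (x n)) (x n)).
have hxd j n n' : (n < L)%N -> (n' < L)%N ->
    ip (A j (x n)) (x n') = (n == n')%:R * (d n j)%:C.
  move=> hn hn'; case: (eqVneq n n') => [<-|nn']; last first.
    by rewrite mul0r (A_self_adjoint hA) hxA.
  by rewrite mul1r; apply: conjc_fixed_real; rewrite -(ipC hip) (A_self_adjoint hA).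
have hx1 n n' : (n < L)%N -> (n' < L)%N -> ip (x n) (x n') = (n == n')%:R * 1%:C.
  by move=> hn hn'; rewrite hx // mulr1.
have [p [w [w_ge0 _ w_disj w_sum w_bary]]] := exists_barycentric_family d K 0.
have hK s : (s < K)%N -> (s < 2 ^ K)%N.
  by move=> hs; apply: ltn_trans hs (ltn_expl K (ltnSn 1)).
have hsqrt s t n : (s < K)%N -> (t < K)%N ->
    Num.sqrt (w s n) * Num.sqrt (w t n) = (s == t)%:R * w s n.
  move=> hs ht; case: (eqVneq s t) => [<-|st].
    by rewrite mul1r -expr2 sqr_sqrtr.
  by rewrite mul0r -sqrtrM // w_disj ?hK // sqrtr0.
exists p; apply: (Lambda_k_diag_compression hip hA
  (y := fun s => \sum_(n < L) (Num.sqrt (w s n))%:C *: x n)).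
- move=> s t hs ht.
  have := ip_diag_combination (T := id) (fun n => Num.sqrt (w s n))
    (fun n => Num.sqrt (w t n)) (fun _ _ _ => erefl) hx1.
  move=> /= ->.
  under eq_bigr do rewrite hsqrt // mulr1.
  by rewrite -mulr_sumr w_sum ?hK // mulr1 rmorph_nat.
- move=> j s t hs ht.
  rewrite (ip_diag_combination (fun n => Num.sqrt (w s n))
    (fun n => Num.sqrt (w t n)) (A_linear hA j) (hxd j)).
  under eq_bigr do rewrite hsqrt // -mulrA.
  by rewrite -mulr_sumr w_bary ?hK // rmorphM rmorph_nat.
Qed.

End NonEmptiness.

Theorem proposition4p1 (R : realType) (H : lmodType R[i]) (ip : H -> H -> R[i])
  (hH : complex_hilbert_space ip) (hinf : infinite_dimensional H)
  (m : nat) (A : 'I_m -> H -> H)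
  (hA : forall j : 'I_m, bounded_self_adjoint ip (A j)) :
  (forall k : nat, (0 < k)%N -> star_shaped (Lambda_k ip A k)) /\
  (forall a : 'I_m -> R, Lambda_inf ip A a ->
     forall k : nat, (0 < k)%N -> star_center (Lambda_k ip A k) a).
Proof.
have hip : is_inner_product ip by case: hH.
split=> [k _ | a [P [hP hPinf hPa]] k _].
- have [c [P [hP [v [hv hvP _]] hPc]]] := Lambda_k_nonempty hip hA hinf (k * m.+2)%N.
  by exists c; apply: (star_center_Lambda_k (k := k) hip hA hP hPc hv hvP (leqnn _)).
- have [v [hv hvP]] := hPinf (k * m.+2)%N.
  exact: (star_center_Lambda_k (k := k) hip hA hP hPa hv hvP (leqnn _)).
Qed.
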